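(* Let $L=\langle S,A,\to\rangle$ be a labelled transition system. For all $x,y\in\{o,b\}$, the relation $\equiv^{ed}_{E(x,y)}$ is an $(x,y)$-generic bisimulation.
   Context: An LTS is $\langle S,A,\to\rangle$ with states $S$, actions $A$ containing the internal action $\tau$, and $\to\subseteq S\times A\times S$; write $s\xrightarrow{a}t$, and $\twoheadrightarrow$ for the reflexive-transitive closure of $\xrightarrow{\tau}$. For $R\subseteq S\times S$ and $s,s',t$: $s\twoheadrightarrow_{o,R,t}s'$ iff $s\twoheadrightarrow s'$; $s\twoheadrightarrow_{b,R,t}s'$ iff $s\twoheadrightarrow s'$, $t\,R\,s$ and $t\,R\,s'$. For $x,y\in\{o,b\}$, a symmetric $R$ is an $(x,y)$-generic bisimulation if whenever $s\,R\,t$ and $s\xrightarrow{a}s'$, either $a=\tau$ and $s'\,R\,t$, or there exist $t',t_1,t_2$ with $t\twoheadrightarrow_{x,R,s}t_1\xrightarrow{a}t_2\twoheadrightarrow_{y,R,s'}t'$ and $s'\,R\,t'$. Game with explicit divergence. Let $\frown,\smile$ be formal tags and $E\subseteq\{\frown,\smile\}$. Spoiler-owned configurations $\langle (s,t),c,m,r\rangle_S$ and Duplicator-owned $\langle (s,t),c,m,r\rangle_D$ have $(s,t)\in S\times S$, $c\in (A\times S)\cup\{\dagger\}$, $m\in (S\times\{\frown,\smile\})\cup\{\dagger\}$, $r\in\{*,\checkmark\}$. From $\langle (s,t),c,m,r\rangle_S$ Spoiler may: (S1) move to $\langle (s,t),c,m,*\rangle_D$ if $c\neq\dagger$; (S2a)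 for some $s\xrightarrow{a}s'$, move to $\langle (s,t),(a,s'),(t,\frown),*\rangle_D$ if $c=\dagger$; (S2b) for some $s\xrightarrow{a}s'$, move to $\langle (s,t),(a,s'),(t,\frown),\checkmark\rangle_D$ if $c\neq (a,s')$; (S3) for some $t\xrightarrow{a}t'$, move to $\langle (t,s),(a,t'),(s,\frown),\checkmark\rangle_D$. From $\langle (u,v),(a,u'),(\bar v,f),r\rangle_D$ Duplicator may: (D1) move to $\langle (u',\bar v),\dagger,\dagger,*\rangle_S$ if $a=\tau$; (D2) if $f=\frown$ and $\bar v\xrightarrow{a}v'$: (a) move to $\langle (u',v'),(a,u'),(v',\smile),*\rangle_S$, or (b) move to $\langle (u',v'),\dagger,\dagger,\checkmark\rangle_S$, or (c) only if $\smile\in E$, move to $\langle (u,v),(a,u'),(v',\smile),*\rangle_S$; (D3) for some $\bar v\xrightarrow{\tau}v'$: (a) move to $\langle (u,v'),(a,u'),(v',f),*\rangle_S$, or (b) only if $f=\smile$, move to $\langle (u',v'),\dagger,\dagger,\checkmark\rangle_S$, or (c) only if $f\in E$, move to $\langle (u,v),(a,u'),(v',f),*\rangle_S$. Duplicator wins a finite play if Spoiler gets stuck, and an infinite play if it has infinitely many $\checkmark$ rewards; other plays are won by Spoiler. $s\equiv^{ed}_E t$ iff Duplicator has a strategy winning all plays from $\langle (s,t),\dagger,\dagger,*\rangle_S$. $E(x,y)$ is the smallest set with $\frown\in E(o,y)$ and $\smile\in E(x,o)$ for all $x,y\in\{o,b\}$. *)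

From Stdlib Require Import List.
Import ListNotations.
Set Implicit Arguments.

Record LTS := mkLTS {
  St : Type;
  Act : Type;
  tau : Act;
  trans : St -> Act -> St -> Prop
}.

Section Defs.
Variable L : LTS.
Notation S := (St L).
Notation A := (Act L).
Notation step := (trans L).

Inductive tau_star : S -> S -> Prop :=
| ts_refl s : tau_star s s
| ts_step s s1 s' : step s (tau L) s1 -> tau_star s1 s' -> tau_star s s'.

Inductive mode := o | b.

Definition tau_rel (x : mode) (R : S -> S -> Prop) (t s s' : S) : Prop :=
  match x with
  | o => tau_star s s'
  | b => tau_star s s' /\ R t s /\ R t s'
  end.

Definition symmetric (R : S -> S -> Prop) : Prop := forall s t, R s t -> R t s.

Definition generic_bisim (x y : mode) (R : S -> S -> Prop) : Prop :=
  symmetric R /\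
  forall s t a s', R s t -> step s a s' ->
    (a = tau L /\ R s' t) \/
    (exists t' t1 t2, tau_rel x R s t t1 /\ step t1 a t2 /\ tau_rel y R s' t2 t' /\ R s' t').

Inductive tag := frown | smile.
Inductive player := Spoiler | Duplicator.

(** configuration <(s,t), c, m, r>_owner ; [None] stands for the dagger,
    [rr = true] for the reward checkmark, [rr = false] for * *)
Record conf := mkConf {
  owner : player;
  pos : S * S;
  cc : option (A * S);
  mm : option (S * tag);
  rr : bool
}.

Section Game.
Variable E : tag -> Prop.

Inductive move : conf -> conf -> Prop :=
| S1 s t c m r :
    c <> None ->
    move (mkConf Spoiler (s, t) c m r) (mkConf Duplicator (s, t) c m false)
| S2a s t m r a s' :
    step s a s' ->
    move (mkConf Spoiler (s, t) None m r)
         (mkConf Duplicator (s, t) (Some (a, s')) (Some (t, frown)) false)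
| S2b s t c m r a s' :
    step s a s' -> c <> Some (a, s') ->
    move (mkConf Spoiler (s, t) c m r)
         (mkConf Duplicator (s, t) (Some (a, s')) (Some (t, frown)) true)
| S3 s t c m r a t' :
    step t a t' ->
    move (mkConf Spoiler (s, t) c m r)
         (mkConf Duplicator (t, s) (Some (a, t')) (Some (s, frown)) true)
| D1 u v a u' vb f r :
    a = tau L ->
    move (mkConf Duplicator (u, v) (Some (a, u')) (Some (vb, f)) r)
         (mkConf Spoiler (u', vb) None None false)
| D2a u v a u' vb r v' :
    step vb a v' ->
    move (mkConf Duplicator (u, v) (Some (a, u')) (Some (vb, frown)) r)
         (mkConf Spoiler (u', v') (Some (a, u')) (Some (v', smile)) false)
| D2b u v a u' vb r v' :
    step vb a v' ->
    move (mkConf Duplicator (u, v) (Some (a, u')) (Some (vb, frown)) r)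
         (mkConf Spoiler (u', v') None None true)
| D2c u v a u' vb r v' :
    step vb a v' -> E smile ->
    move (mkConf Duplicator (u, v) (Some (a, u')) (Some (vb, frown)) r)
         (mkConf Spoiler (u, v) (Some (a, u')) (Some (v', smile)) false)
| D3a u v a u' vb f r v' :
    step vb (tau L) v' ->
    move (mkConf Duplicator (u, v) (Some (a, u')) (Some (vb, f)) r)
         (mkConf Spoiler (u, v') (Some (a, u')) (Some (v', f)) false)
| D3b u v a u' vb r v' :
    step vb (tau L) v' ->
    move (mkConf Duplicator (u, v) (Some (a, u')) (Some (vb, smile)) r)
         (mkConf Spoiler (u', v') None None true)
| D3c u v a u' vb f r v' :
    step vb (tau L) v' -> E f ->
    move (mkConf Duplicator (u, v) (Some (a, u')) (Some (vb, f)) r)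
         (mkConf Spoiler (u, v) (Some (a, u')) (Some (v', f)) false).

(** A (history-dependent) Duplicator strategy maps a finite play (as a list,
    most recent configuration first) to the configuration it moves to.  If the
    proposed configuration is not a legal move, Duplicator is stuck. *)
Definition dstrategy := list conf -> conf.

Definition cons_step (sigma : dstrategy) (h : list conf) (c' : conf) : Prop :=
  match h with
  | [] => False
  | cur :: _ =>
      match owner cur with
      | Spoiler => move cur c'
      | Duplicator => c' = sigma h /\ move cur c'
      end
  end.

Inductive reach (sigma : dstrategy) (init : conf) : list conf -> Prop :=
| reach_init : reach sigma init [init]
| reach_step h c' : reach sigma init h -> cons_step sigma h c' -> reach sigma init (c' :: h).

Fixpoint hist (p : nat -> conf) (n : nat) : list conf :=
  match n with
  | 0 => [p 0]
  | Datatypes.S k => p (Datatypes.S k) :: hist p k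
  end.

Definition inf_play (sigma : dstrategy) (init : conf) (p : nat -> conf) : Prop :=
  p 0 = init /\ forall n, cons_step sigma (hist p n) (p (Datatypes.S n)).

Definition dwinning (sigma : dstrategy) (init : conf) : Prop :=
  (forall h cur rest, reach sigma init h -> h = cur :: rest ->
     (forall c', ~ cons_step sigma h c') -> owner cur = Spoiler) /\
  (forall p, inf_play sigma init p ->
     forall N, exists n, N <= n /\ rr (p n) = true).

Definition equiv_ed (s t : S) : Prop :=
  exists sigma, dwinning sigma (mkConf Spoiler (s, t) None None false).

End Game.

Definition Exy (x y : mode) (f : tag) : Prop :=
  match f with
  | frown => x = o
  | smile => y = o
  end.

End Defs.

(* A winning Duplicator cannot keep a challenge pending forever, since
   Spoiler's S1 earns no checkmark.  So once Spoiler challenges [s -a-> s'] by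
   S2a, Duplicator's strategy yields, in finitely many moves, a tau-path from [t]
   (frown mode), an [a]-step (D2) and a tau-path (smile mode) ending in a won
   reset configuration, i.e. in some [t'] with [s' == t'].  Every intermediate
   frown configuration is won, hence related to [s], because Spoiler could issue
   any other challenge from it by S2b; likewise the configuration reached by D2
   is related to [s'].  The stuttering moves D2c and D3c, which break these
   invariants, are available only for the tags in E(x,y), i.e. in the phases
   where (x,y) asks for no relatedness.  Symmetry comes from S3. *)

From Stdlib Require Import List Classical FunctionalExtensionality ClassicalEpsilon.
Import ListNotations.
Set Implicit Arguments.
Unset Strict Implicit.

Section Strategies.
Variables (L : LTS) (E : tag -> Prop).
Notation conf := (conf L).
Notation mv := (move E).
Implicit Types (sigma : dstrategy L) (c d : conf) (h rest : list conf).

Definition dwins c := exists sigma, dwinning E sigma c.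

Lemma move_rr o p oc m r r' c' :
  mv (mkConf L o p oc m r) c' -> mv (mkConf L o p oc m r') c'.
Proof. intro H; inversion H; subst; econstructor; eauto. Qed.

Lemma reach_snoc sigma c h : reach E sigma c h -> exists h', h = h' ++ [c].
Proof.
  induction 1 as [|h c' _ [h' ->] _].
  - exists []; reflexivity.
  - exists (c' :: h'); reflexivity.
Qed.

Lemma reach_last sigma c h d : reach E sigma c h -> last h d = c.
Proof. intro H; destruct (reach_snoc H) as [h' ->]; apply last_last. Qed.

Lemma reach_nonnil sigma c h : reach E sigma c h -> h <> [].
Proof. intro H; destruct (reach_snoc H) as [h' ->]; destruct h'; discriminate. Qed.

Lemma hist_nonnil (p : nat -> conf) n : hist p n <> [].
Proof. destruct n; discriminate. Qed.

Lemma hist_last (p : nat -> conf) n d : last (hist p n) d = p 0.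
Proof.
  induction n as [|n IH]; [reflexivity|].
  destruct n; [reflexivity|exact IH].
Qed.

Lemma hist_shift (p : nat -> conf) n :
  hist p (S n) = hist (fun k => p (S k)) n ++ [p 0].
Proof.
  induction n as [|n IH]; [reflexivity|].
  change (hist p (S (S n))) with (p (S (S n)) :: hist p (S n)).
  rewrite IH; reflexivity.
Qed.

(* Play [d0] at [c] if it is Duplicator's; afterwards [last (removelast h) c]
   is the first move [c1], and [f c1] is consulted on the history without [c]. *)
Definition after_first c d0 (f : conf -> dstrategy L) : dstrategy L :=
  fun h => match h with
           | [] | [_] => d0
           | _ :: _ :: _ => f (last (removelast h) c) (removelast h)
           end.

Lemma after_first_app c d0 f h1 : h1 <> [] ->
  after_first c d0 f (h1 ++ [c]) = f (last h1 c) h1.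
Proof.
  intro Hne; destruct h1 as [|z h1]; [congruence|].
  transitivity (f (last (removelast ((z :: h1) ++ [c])) c) (removelast ((z :: h1) ++ [c]))).
  - destruct h1; reflexivity.
  - rewrite removelast_last; reflexivity.
Qed.

Lemma cons_step_after_first c d0 f h1 c' : h1 <> [] ->
  cons_step E (after_first c d0 f) (h1 ++ [c]) c' <-> cons_step E (f (last h1 c)) h1 c'.
Proof.
  intro Hne; pose proof (@after_first_app c d0 f h1 Hne) as Happ.
  destruct h1 as [|z h1]; [congruence|].
  unfold cons_step; cbn [app] in *; rewrite Happ; tauto.
Qed.

Lemma reach_after_first c d0 f h : reach E (after_first c d0 f) c h ->
  h = [c] \/ exists c1 h1, h = h1 ++ [c] /\
    cons_step E (after_first c d0 f) [c] c1 /\ reach E (f c1) c1 h1.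
Proof.
  induction 1 as [|h c' _ IH Hc]; [left; reflexivity|right].
  destruct IH as [->|[c1 [h1 [-> [Hc1 Hr1]]]]].
  - exists c', [c']; repeat split; [exact Hc|constructor].
  - exists c1, (c' :: h1); repeat split; [exact Hc1|].
    constructor; [exact Hr1|].
    apply (@cons_step_after_first c d0 f _ _ (reach_nonnil Hr1)) in Hc.
    rewrite (reach_last _ Hr1) in Hc; exact Hc.
Qed.

Lemma dwinning_after_first c d0 f :
  (owner c = Duplicator -> mv c d0) ->
  (forall c1, cons_step E (after_first c d0 f) [c] c1 -> dwinning E (f c1) c1) ->
  dwinning E (after_first c d0 f) c.
Proof.
  intros Hd0 Hf; split.
  - intros h cur rest Hr -> Hstuck.
    destruct (reach_after_first Hr) as [Eh|[c1 [h1 [Eh [Hc1 Hr1]]]]].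
    + injection Eh as -> ->. destruct (owner c) eqn:Ho; [reflexivity|].
      exfalso; apply (Hstuck d0); unfold cons_step; rewrite Ho; auto.
    + destruct h1 as [|z h1]; [destruct (reach_nonnil Hr1 eq_refl)|].
      injection Eh as -> ->.
      apply (proj1 (Hf c1 Hc1) _ z h1 Hr1 eq_refl); intros c' Hc'.
      apply (Hstuck c'), (@cons_step_after_first c d0 f _ _ (reach_nonnil Hr1)).
      rewrite (reach_last _ Hr1); exact Hc'.
  - intros p [H0 Hp] N.
    assert (Hc1 : cons_step E (after_first c d0 f) [c] (p 1)).
    { rewrite <- H0; exact (Hp 0). }
    destruct (proj2 (Hf _ Hc1) (fun k => p (S k))) with (N := N) as [n [Hn Hrr]].
    + split; [reflexivity|]; intro n.
      specialize (Hp (S n)); rewrite hist_shift, H0 in Hp.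
      apply (@cons_step_after_first c d0 f _ _ (@hist_nonnil (fun k => p (S k)) n)) in Hp.
      rewrite hist_last in Hp; exact Hp.
    + exists (S n); auto.
Qed.

Lemma dwinning_step sigma c0 c1 : dwinning E sigma c0 -> cons_step E sigma [c0] c1 ->
  dwinning E (fun h => sigma (h ++ [c0])) c1.
Proof.
  intros [Wstuck Winf] Hc.
  assert (Hr : forall h, reach E (fun h => sigma (h ++ [c0])) c1 h ->
                         reach E sigma c0 (h ++ [c0])).
  { induction 1 as [|h c' Hr IH Hc'].
    - econstructor; [constructor|exact Hc].
    - econstructor; [exact IH|].
      destruct h; [destruct (reach_nonnil Hr eq_refl)|exact Hc']. }
  split.
  - intros h cur rest Hh -> Hstuck.
    apply (Wstuck _ cur (rest ++ [c0]) (Hr _ Hh) eq_refl), Hstuck.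
  - intros p [H0 Hp] N.
    set (p' := fun n => match n with 0 => c0 | S k => p k end).
    destruct (Winf p') with (N := S N) as [[|n] [Hn Hrr]].
    + split; [reflexivity|]; intros [|n].
      * simpl; rewrite <- H0 in Hc; exact Hc.
      * rewrite hist_shift; specialize (Hp n); destruct n; exact Hp.
    + inversion Hn.
    + exists n; auto with arith.
Qed.

Lemma dwinning_reach sigma c0 cur rest : dwinning E sigma c0 ->
  reach E sigma c0 (cur :: rest) -> dwinning E (fun h => sigma (h ++ rest)) cur.
Proof.
  intros W Hr; remember (cur :: rest) as h eqn:Eh; revert cur rest Eh.
  induction Hr as [|h c' Hr IH Hc]; intros cur rest Eh.
  - injection Eh as <- <-.
    replace (fun h => sigma (h ++ [])) with sigma; [exact W|].
    extensionality h; rewrite app_nil_r; reflexivity.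
  - injection Eh as <- <-.
    destruct h as [|z h]; [destruct (reach_nonnil Hr eq_refl)|].
    pose proof (dwinning_step (IH z h eq_refl) Hc) as Wstep.
    replace (fun h' => sigma (h' ++ z :: h))
      with (fun h' => sigma ((h' ++ [z]) ++ h)); [exact Wstep|].
    extensionality h'; rewrite <- app_assoc; reflexivity.
Qed.

Lemma dwinning_legal sigma c0 cur rest : dwinning E sigma c0 ->
  reach E sigma c0 (cur :: rest) -> owner cur = Duplicator -> mv cur (sigma (cur :: rest)).
Proof.
  intros [Wstuck _] Hr Ho; apply NNPP; intro Hn.
  enough (owner cur = Spoiler) by congruence.
  apply (Wstuck _ cur rest Hr eq_refl); intros c' Hc.
  unfold cons_step in Hc; rewrite Ho in Hc; destruct Hc as [-> Hc]; auto.
Qed.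

Lemma dwins_spoiler c : owner c = Spoiler -> (forall c1, mv c c1 -> dwins c1) -> dwins c.
Proof.
  intros Ho Hwin.
  assert (Hf : forall c1, {sigma | mv c c1 -> dwinning E sigma c1}).
  { intro c1; apply constructive_indefinite_description.
    destruct (classic (mv c c1)) as [Hm|Hm].
    - destruct (Hwin c1 Hm) as [sigma W]; exists sigma; auto.
    - exists (fun _ => c1); contradiction. }
  exists (after_first c c (fun c1 => proj1_sig (Hf c1))).
  apply dwinning_after_first; [congruence|].
  intros c1 Hc1; apply (proj2_sig (Hf c1)).
  unfold cons_step in Hc1; rewrite Ho in Hc1; exact Hc1.
Qed.

Lemma dwins_duplicator c c1 : owner c = Duplicator -> mv c c1 -> dwins c1 -> dwins c.
Proof.
  intros Ho Hm [sigma W]; exists (after_first c c1 (fun _ => sigma)).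
  apply dwinning_after_first; [auto|].
  intros c2 Hc2; unfold cons_step in Hc2; rewrite Ho in Hc2.
  destruct Hc2 as [-> _]; exact W.
Qed.

Lemma dwins_spoiler_inv c c1 : dwins c -> owner c = Spoiler -> mv c c1 -> dwins c1.
Proof.
  intros [sigma W] Ho Hm; eexists; apply (dwinning_step W).
  unfold cons_step; rewrite Ho; exact Hm.
Qed.

Lemma dwins_duplicator_inv c : dwins c -> owner c = Duplicator ->
  exists c1, mv c c1 /\ dwins c1.
Proof.
  intros [sigma W] Ho.
  pose proof (dwinning_legal W (reach_init _ _ _) Ho) as Hm.
  exists (sigma [c]); split; [exact Hm|].
  eexists; apply (dwinning_step W); unfold cons_step; rewrite Ho; auto.
Qed.

Lemma dwins_rr o p oc m r r' : dwins (mkConf L o p oc m r) -> dwins (mkConf L o p oc m r').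
Proof.
  intro W; destruct o.
  - apply dwins_spoiler; [reflexivity|]; intros c1 Hm.
    exact (dwins_spoiler_inv W eq_refl (move_rr _ Hm)).
  - destruct (dwins_duplicator_inv W eq_refl) as [c1 [Hm W1]].
    apply (@dwins_duplicator _ c1); [reflexivity|exact (move_rr _ Hm)|exact W1].
Qed.

End Strategies.

Section ForcedReset.
Variables (L : LTS) (E : tag -> Prop).
Notation conf := (conf L).
Notation mv := (move E).
Notation dwins := (dwins E).
Implicit Types (sigma : dstrategy L) (c d : conf).

Definition s1_reply c : conf := mkConf L Duplicator (pos c) (cc c) (mm c) false.

Lemma move_s1_reply c : owner c = Spoiler -> cc c <> None -> mv c (s1_reply c).
Proof. destruct c as [o [s t] oc m r]; simpl; intros -> Hc; apply S1, Hc. Qed.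

Lemma move_duplicator_spoiler d c1 : mv d c1 -> owner d = Duplicator ->
  owner c1 = Spoiler /\ (cc c1 <> None -> rr c1 = false).
Proof. intros H Ho; inversion H; subst; simpl in *; try discriminate; intuition. Qed.

(* Duplicator can reach a winning configuration with no pending challenge in
   finitely many moves, Spoiler answering every intermediate one by S1. *)
Inductive forces_reset : conf -> Prop :=
| forces_reset_now d c1 : mv d c1 -> cc c1 = None -> dwins c1 -> forces_reset d
| forces_reset_later d c1 : mv d c1 -> cc c1 <> None -> dwins c1 ->
    forces_reset (s1_reply c1) -> forces_reset d.

Section S1Play.
Variables (sigma : dstrategy L) (d : conf).

Definition s1_next h : conf :=
  match h with
  | [] => d
  | cur :: _ => match owner cur with Spoiler => s1_reply cur | Duplicator => sigma h end
  end.

Fixpoint s1_hist n : list conf :=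
  match n with 0 => [d] | S k => s1_next (s1_hist k) :: s1_hist k end.

Definition s1_play n : conf := hd d (s1_hist n).

Lemma hist_s1_play n : hist s1_play n = s1_hist n.
Proof. induction n as [|n IH]; [reflexivity|]; simpl; rewrite IH; reflexivity. Qed.

Lemma s1_hist_hd n : exists tl, s1_hist n = s1_play n :: tl.
Proof. destruct n; eexists; reflexivity. Qed.

Lemma s1_play_S n : s1_play (S n) =
  match owner (s1_play n) with
  | Spoiler => s1_reply (s1_play n)
  | Duplicator => sigma (s1_hist n)
  end.
Proof.
  destruct (s1_hist_hd n) as [tl Htl].
  change (s1_play (S n)) with (s1_next (s1_hist n)); rewrite Htl; reflexivity.
Qed.

Lemma cons_step_s1_hist n c' : cons_step E sigma (s1_hist n) c' <->
  match owner (s1_play n) with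
  | Spoiler => mv (s1_play n) c'
  | Duplicator => c' = sigma (s1_hist n) /\ mv (s1_play n) c'
  end.
Proof. destruct (s1_hist_hd n) as [tl ->]; tauto. Qed.

Hypotheses (W : dwinning E sigma d) (Hd : owner d = Duplicator) (Hno : ~ forces_reset d).

Definition s1_invariant n : Prop :=
  reach E sigma d (s1_hist n) /\ (1 <= n -> rr (s1_play n) = false) /\
  match owner (s1_play n) with
  | Duplicator => ~ forces_reset (s1_play n)
  | Spoiler => cc (s1_play n) <> None /\ ~ forces_reset (s1_reply (s1_play n))
  end.

Lemma s1_invariant_step n : s1_invariant n -> cons_step E sigma (s1_hist n) (s1_play (S n)).
Proof.
  intros [Hr [_ Hinv]]; apply cons_step_s1_hist; rewrite s1_play_S.
  destruct (owner (s1_play n)) eqn:Ho.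
  - apply move_s1_reply; [exact Ho|apply Hinv].
  - split; [reflexivity|].
    destruct (s1_hist_hd n) as [tl Htl]; rewrite Htl in Hr |- *.
    exact (dwinning_legal W Hr Ho).
Qed.

Lemma s1_invariant_S n : s1_invariant n -> s1_invariant (S n).
Proof.
  intro Hn; pose proof (s1_invariant_step Hn) as Hstep.
  destruct Hn as [Hr [_ Hinv]].
  assert (Hr' : reach E sigma d (s1_hist (S n))) by (econstructor; eauto).
  split; [exact Hr'|].
  apply cons_step_s1_hist in Hstep; destruct (owner (s1_play n)) eqn:Ho.
  - rewrite s1_play_S, Ho; split; [reflexivity|apply Hinv].
  - destruct Hstep as [_ Hmv].
    destruct (move_duplicator_spoiler Hmv Ho) as [Hs Hrr].
    assert (Hwin : dwins (s1_play (S n))).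
    { destruct (s1_hist_hd (S n)) as [tl Htl]; rewrite Htl in Hr'.
      eexists; exact (dwinning_reach W Hr'). }
    assert (Hcc : cc (s1_play (S n)) <> None).
    { intro Hn; apply Hinv; eapply forces_reset_now; eauto. }
    split; [auto|]; rewrite Hs; split; [exact Hcc|].
    intro HR; apply Hinv; eapply forces_reset_later; eauto.
Qed.

Lemma s1_invariant_all n : s1_invariant n.
Proof.
  induction n as [|n IH]; [|exact (s1_invariant_S IH)].
  split; [constructor|]; split; [intro H; inversion H|].
  change (s1_play 0) with d; rewrite Hd; exact Hno.
Qed.

End S1Play.

Lemma dwins_forces_reset d : dwins d -> owner d = Duplicator -> forces_reset d.
Proof.
  intros [sigma W] Hd; apply NNPP; intro Hno.
  destruct (proj2 W (s1_play sigma d)) with (N := 1) as [n [Hn Hrr]].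
  - split; [reflexivity|]; intro n; rewrite hist_s1_play.
    exact (s1_invariant_step W (s1_invariant_all W Hd Hno n)).
  - destruct (s1_invariant_all W Hd Hno n) as [_ [Hf _]].
    rewrite Hf in Hrr; [discriminate|exact Hn].
Qed.

End ForcedReset.

Section Bisimulation.
Variables (L : LTS) (E : tag -> Prop).
Notation mv := (move E).
Notation dwins := (dwins E).
Notation R := (equiv_ed L E).

Lemma conf_eta c : mkConf L (owner c) (pos c) (cc c) (mm c) (rr c) = c.
Proof. destruct c; reflexivity. Qed.

Lemma dwins_spoiler_sim c c' : dwins c -> owner c = Spoiler -> owner c' = Spoiler ->
  (forall c1, mv c' c1 -> exists r, mv c (mkConf L (owner c1) (pos c1) (cc c1) (mm c1) r)) ->
  dwins c'.
Proof.
  intros W Ho Ho' Hsim; apply dwins_spoiler; [exact Ho'|]; intros c1 Hm.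
  destruct (Hsim c1 Hm) as [r Hm'].
  rewrite <- conf_eta; exact (dwins_rr _ (dwins_spoiler_inv W Ho Hm')).
Qed.

Lemma equiv_ed_sym s t : R s t -> R t s.
Proof.
  intro W; apply (dwins_spoiler_sim W); [reflexivity|reflexivity|].
  intros c1 Hm; inversion Hm; subst; simpl; try congruence.
  - exists true; apply S3; assumption.
  - exists true; apply S3; assumption.
  - exists true; apply S2b; [assumption|discriminate].
Qed.

(* Spoiler's S2b covers every challenge except the pending one, and S1 covers
   that one. *)
Lemma equiv_of_frown s v a s' r :
  dwins (mkConf L Spoiler (s, v) (Some (a, s')) (Some (v, frown)) r) -> R s v.
Proof.
  intro W; apply (dwins_spoiler_sim W); [reflexivity|reflexivity|].
  intros c1 Hm; inversion Hm; subst; simpl; try congruence.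
  1, 2: destruct (classic ((a0, s'0) = (a, s'))) as [He|Hne];
    [rewrite He; exists false; apply S1; discriminate
    |exists true; apply S2b; [assumption|congruence]].
  exists true; apply S3; assumption.
Qed.

Section NoSmile.
Hypothesis HE : ~ E smile.

(* Smile-mode moves D1, D3a, D3b (D3c is excluded by [HE]) are replayed in
   frown mode as D1, D3a, D3a.  This replaces D3b soundly: Spoiler's S1 then
   reaches the configuration that S2a along the self-loop [u -a-> u] reaches
   from the reset at [(u, v')]. *)
Lemma dwins_frown_of_smile u a : trans L u a u -> forall v,
  dwins (mkConf L Duplicator (u, v) (Some (a, u)) (Some (v, smile)) false) ->
  dwins (mkConf L Duplicator (u, v) (Some (a, u)) (Some (v, frown)) false).
Proof.
  intros Hu v W.
  remember (mkConf L Duplicator (u, v) (Some (a, u)) (Some (v, smile)) false) as d eqn:Ed.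
  pose proof (dwins_forces_reset W (f_equal (@owner L) Ed)) as HR; clear W.
  revert v Ed; induction HR as [d c1 Hm Hc W1 | d c1 Hm Hc W1 _ IH]; intros v0 ->;
    inversion Hm; subst; simpl in Hc; try congruence.
  - eapply dwins_duplicator; [reflexivity|apply D1; reflexivity|exact W1].
  - eapply dwins_duplicator; [reflexivity|apply D3a; eassumption|].
    apply dwins_spoiler; [reflexivity|]; intros c2 Hm2.
    inversion Hm2; subst; eapply (dwins_spoiler_inv W1); try reflexivity.
    + apply S2a, Hu.
    + apply S2b; [assumption|discriminate].
    + apply S3; assumption.
  - eapply dwins_duplicator; [reflexivity|apply D3a; eassumption|].
    apply dwins_spoiler; [reflexivity|]; intros c2 Hm2.
    inversion Hm2; subst.
    + exact (IH v' eq_refl).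
    + eapply (dwins_spoiler_inv W1); [reflexivity|]; apply S2b; [assumption|congruence].
    + eapply (dwins_spoiler_inv W1); [reflexivity|]; apply S3; assumption.
Qed.

Lemma equiv_of_smile u v a :
  dwins (mkConf L Spoiler (u, v) (Some (a, u)) (Some (v, smile)) false) -> R u v.
Proof.
  intro W; apply dwins_spoiler; [reflexivity|]; intros c1 Hm.
  inversion Hm; subst; try congruence;
    try (eapply (dwins_spoiler_inv W); [reflexivity|]; apply S3; assumption).
  all: destruct (classic ((a0, s') = (a, u))) as [He|Hne];
    [injection He as -> ->; apply dwins_rr with (r := false), dwins_frown_of_smile;
     [assumption|]; eapply (dwins_spoiler_inv W); [reflexivity|]; apply S1; discriminate
    |apply dwins_rr with (r := true); eapply (dwins_spoiler_inv W); [reflexivity|];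
     apply S2b; [eassumption|congruence]].
Qed.

End NoSmile.

Lemma tau_star_snoc s u v : tau_star L s u -> trans L u (tau L) v -> tau_star L s v.
Proof.
  induction 1 as [s|s s1 u Hs _ IH]; intro Huv.
  - eapply ts_step; [exact Huv|constructor].
  - eapply ts_step; [exact Hs|auto].
Qed.

Definition bisim_answer x y s t a s' : Prop :=
  (a = tau L /\ R s' t) \/
  (exists t' t1 t2, tau_rel L x R s t t1 /\ trans L t1 a t2 /\
                    tau_rel L y R s' t2 t' /\ R s' t').

Lemma tau_rel_of_star y s' t2 t' : tau_star L t2 t' -> (y = b -> R s' t2) -> R s' t' ->
  tau_rel L y R s' t2 t'.
Proof. destruct y; simpl; auto. Qed.

Lemma bisim_answer_smile x y s t a s' t1 t2 : tau_rel L x R s t t1 -> trans L t1 a t2 ->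
  (y = b -> R s' t2) -> forall p w vb r,
  forces_reset E (mkConf L Duplicator (p, w) (Some (a, s')) (Some (vb, smile)) r) ->
  tau_star L t2 vb -> bisim_answer x y s t a s'.
Proof.
  intros Ht1 Hstep Hy p w vb r HR.
  remember (mkConf L Duplicator (p, w) (Some (a, s')) (Some (vb, smile)) r) as d eqn:Ed.
  revert p w vb r Ed.
  induction HR as [d c1 Hm Hc W1 | d c1 Hm Hc W1 _ IH]; intros p w vb r -> Hvb;
    inversion Hm; subst; simpl in Hc; try congruence.
  - right; exists vb, t1, t2; repeat split; [exact Ht1|exact Hstep| |exact W1].
    apply tau_rel_of_star; auto.
  - right; exists v', t1, t2; repeat split; [exact Ht1|exact Hstep| |].
    + apply tau_rel_of_star; [eapply tau_star_snoc; eauto|auto|exact (dwins_rr _ W1)].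
    + exact (dwins_rr _ W1).
  - eapply IH; [reflexivity|eapply tau_star_snoc; eauto].
  - eapply IH; [reflexivity|eapply tau_star_snoc; eauto].
Qed.

Lemma bisim_answer_frown x y (HEf : E frown -> x = o) (HEs : E smile -> y = o) s t a s' :
  R s t -> trans L s a s' -> forall w vb r,
  forces_reset E (mkConf L Duplicator (s, w) (Some (a, s')) (Some (vb, frown)) r) ->
  tau_rel L x R s t vb ->
  (vb = t \/ exists t0, tau_rel L x R s t t0 /\ trans L t0 (tau L) vb) ->
  bisim_answer x y s t a s'.
Proof.
  intros Rst Hs w vb r HR.
  remember (mkConf L Duplicator (s, w) (Some (a, s')) (Some (vb, frown)) r) as d eqn:Ed.
  revert w vb r Ed.
  induction HR as [d c1 Hm Hc W1 | d c1 Hm Hc W1 HR IH]; intros w vb r -> Hvb Hlast;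
    inversion Hm; subst; simpl in Hc; try congruence.
  - destruct Hlast as [->|[t0 [Ht0 Hstep]]]; [left; auto|right].
    exists vb, t0, vb; repeat split; [exact Ht0|exact Hstep| |exact W1].
    apply tau_rel_of_star; auto; constructor.
  - right; exists v', vb, v'; repeat split; [exact Hvb|assumption| |].
    + apply tau_rel_of_star; [constructor|intros _|]; exact (dwins_rr _ W1).
    + exact (dwins_rr _ W1).
  - eapply (bisim_answer_smile Hvb); [eassumption| |exact HR|constructor].
    intro Hyb; apply equiv_of_smile with (a := a); [|exact W1].
    intro Hsm; apply HEs in Hsm; congruence.
  - eapply (bisim_answer_smile Hvb); [eassumption| |exact HR|constructor].
    intro Hyb; match goal with Hsm : E smile |- _ => apply HEs in Hsm end; congruence.
  - eapply IH; [reflexivity| |right; exists vb; auto].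
    destruct x; simpl in *.
    + eapply tau_star_snoc; eauto.
    + destruct Hvb as [Hvb _]; repeat split; [eapply tau_star_snoc; eauto|exact Rst|].
      exact (equiv_of_frown W1).
  - assert (x = o) as -> by auto.
    eapply IH; [reflexivity| |right; exists vb; auto].
    simpl in *; eapply tau_star_snoc; eauto.
Qed.

End Bisimulation.

Theorem lemma6p8 (L : LTS) (x y : mode) :
  generic_bisim L x y (equiv_ed L (Exy x y)).
Proof.
  split; [intros s t; apply equiv_ed_sym|].
  intros s t a s' Rst Hs.
  assert (W : dwins (Exy x y)
                (mkConf L Duplicator (s, t) (Some (a, s')) (Some (t, frown)) false)).
  { eapply (dwins_spoiler_inv Rst); [reflexivity|]; apply S2a, Hs. }
  eapply (bisim_answer_frown (x := x) (y := y)); auto.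
  - exact (dwins_forces_reset W eq_refl).
  - destruct x; [apply ts_refl|split; [apply ts_refl|auto]].
Qed.
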